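(* Let $T>0$, $I=[0,T]$. Let $\Phi:\mathbb{R}\to\mathbb{R}$ be a strictly increasing homeomorphism; $a\in C(I\times\mathbb{R},\mathbb{R})$ with $a(t,x)\ge h(t)$ for all $(t,x)$, where $h\in C(I,\mathbb{R})$, $h\ge0$, $1/h\in L^p(I)$ for some $p>1$; $f:I\times\mathbb{R}^2\to\mathbb{R}$ Carathéodory. Let $\alpha,\beta\in W^{1,p}(I)$ be respectively a lower and an upper solution of $(\Phi(a(t,x(t))x'(t)))'=f(t,x(t),x'(t))$ with $\alpha\le\beta$ on $I$, and assume $a(0,x)\ne0$ and $a(T,x)\ne0$ for every $x\in\mathbb{R}$. Then: (i) if $\alpha(0)=\beta(0)$, then $\mathcal{A}_\alpha(0)\le\mathcal{A}_\beta(0)$; (ii) if $\alpha(T)=\beta(T)$, then $\mathcal{A}_\alpha(T)\ge\mathcal{A}_\beta(T)$.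
   Context: A continuous $\alpha$ is a lower [upper] solution if $\alpha\in W^{1,1}(I)$, $t\mapsto\Phi(a(t,\alpha(t))\alpha'(t))\in W^{1,1}(I)$ and its derivative is $\ge f(t,\alpha(t),\alpha'(t))$ [$\le$] for a.e. $t$. $\mathcal{A}_\alpha$ denotes the unique continuous function on $I$ equal to $a(t,\alpha(t))\alpha'(t)$ a.e. Carathéodory: measurable in $t$, continuous in $(x,y)$ for a.e. $t$. *)

From HB Require Import structures.
From mathcomp Require Import all_boot all_order all_algebra.
From mathcomp Require Import all_classical all_reals all_analysis.
Set Implicit Arguments. Unset Strict Implicit. Unset Printing Implicit Defensive.
Import Order.TTheory GRing.Theory Num.Theory.
Import numFieldNormedType.Exports.
Local Open Scope classical_set_scope.
Local Open Scope ring_scope.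

Section Defs.
Variable R : realType.
Local Notation mu := (@lebesgue_measure R).

Definition Iset (T : R) : set R := [set` `[0, T]].

Definition ae_on (T : R) (P : R -> Prop) : Prop :=
  {ae mu, forall t, Iset T t -> P t}.

Definition Lp (T p : R) (g : R -> R) : Prop :=
  measurable_fun (Iset T) g /\
  (\int[mu]_(t in Iset T) ((`|g t| `^ p)%:E) < +oo)%E.

(* u in W^{1,1}(I): u' (the a.e. derivative of u) is in L^1(I) and
   u(t) = u(0) + int_0^t u' for all t in I (absolute continuity). *)
Definition W11 (T : R) (u : R -> R) : Prop :=
  mu.-integrable (Iset T) (EFin \o derive1 u) /\
  forall t, Iset T t -> u t = u 0 + \int[mu]_(s in [set` `[0, t]]) derive1 u s.

Definition W1p (T p : R) (u : R -> R) : Prop :=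
  W11 T u /\ Lp T p (derive1 u).

(* t |-> Phi(a(t,u(t)) u'(t)) belongs to W^{1,1}(I): there is a W^{1,1}
   function w equal to it a.e. in I; w is then its (AC) representative. *)
Definition flux_rep (T : R) (Phi : R -> R) (a : R -> R -> R) (u w : R -> R) :=
  W11 T w /\ ae_on T (fun t => w t = Phi (a t (u t) * derive1 u t)).

Definition lower_sol (T : R) (Phi : R -> R) (a : R -> R -> R)
  (f : R -> R -> R -> R) (u : R -> R) : Prop :=
  {within Iset T, continuous u} /\ W11 T u /\
  exists w, flux_rep T Phi a u w /\
    ae_on T (fun t => f t (u t) (derive1 u t) <= derive1 w t).

Definition upper_sol (T : R) (Phi : R -> R) (a : R -> R -> R)
  (f : R -> R -> R -> R) (u : R -> R) : Prop :=
  {within Iset T, continuous u} /\ W11 T u /\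
  exists w, flux_rep T Phi a u w /\
    ae_on T (fun t => derive1 w t <= f t (u t) (derive1 u t)).

(* A is (the) continuous function on I equal a.e. to a(t,u(t)) u'(t),
   i.e. A = \mathcal{A}_u *)
Definition is_calA (T : R) (a : R -> R -> R) (u A : R -> R) : Prop :=
  {within Iset T, continuous A} /\
  ae_on T (fun t => A t = a t (u t) * derive1 u t).

Definition Caratheodory (T : R) (f : R -> R -> R -> R) : Prop :=
  (forall x y, measurable_fun (Iset T) (fun t => f t x y)) /\
  ae_on T (fun t => continuous (fun xy : R * R => f t xy.1 xy.2)).

Definition incr_homeo (Phi : R -> R) : Prop :=
  (forall x y, x < y -> Phi x < Phi y) /\ continuous Phi /\
  exists Psi : R -> R, continuous Psi /\ cancel Phi Psi /\ cancel Psi Phi.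

End Defs.

From HB Require Import structures.
From mathcomp Require Import all_boot all_order all_algebra.
From mathcomp Require Import all_classical all_reals all_analysis.
From mathcomp Require Import ring lra.
Set Implicit Arguments. Unset Strict Implicit. Unset Printing Implicit Defensive.
Import Order.TTheory GRing.Theory Num.Theory.
Import numFieldNormedType.Exports.
Local Open Scope classical_set_scope.
Local Open Scope ring_scope.

(** If A_alpha(t0) > A_beta(t0) at an endpoint t0 where alpha(t0) = beta(t0),
    then, since a(t0, alpha(t0)) > 0 and everything is continuous, the quotients
    A_alpha / a(t, alpha) and A_beta / a(t, beta), which are alpha' and beta' a.e.,
    differ by at least some k > 0 near t0.  Integrating (alpha, beta are
    absolutely continuous), alpha - beta grows at rate >= k near t0, which
    pushes alpha strictly above beta next to t0 and contradicts alpha <= beta. *)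

(* The library's [Filter] hint for [almost_everywhere] does not fire on
   [lebesgue_measure]. *)
#[local] Instance ae_lebesgue_filter (R : realType) :
  Filter (almost_everywhere (@lebesgue_measure R)) := ae_filter_ringOfSetsType _.

Section Integrals.
Variable R : realType.
Local Notation mu := (@lebesgue_measure R).

Lemma ae_cst_le_integral (D : set R) (g : R -> R) (k : R) : measurable D ->
  mu.-integrable D (EFin \o g) -> 0 <= k ->
  {ae mu, forall x, D x -> k <= g x} ->
  (k%:E * mu D <= \int[mu]_(x in D) (g x)%:E)%E.
Proof.
move=> mD ig k0 kg; rewrite -integral_cst//.
have mg := measurable_int mu ig.
have mgp := measurable_realfun.measurable_funepos mg.
(* [ae_ge0_le_integral] wants a nonnegative integrand: pass to the positive
   part, which equals [g] a.e. on [D] since [g >= k >= 0] there. *)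
have g_pos : {ae mu, forall x, D x -> (EFin \o g) x = ((EFin \o g)^\+ x)%E}.
  move: kg; apply: filterS => x kgx /kgx kx.
  by rewrite funeposE /= max_l// lee_fin (le_trans k0).
have -> : (\int[mu]_(x in D) (g x)%:E = \int[mu]_(x in D) (EFin \o g)^\+ x)%E.
  by apply: ae_eq_integral => //; exact: g_pos.
apply: ae_ge0_le_integral => //.
by move: g_pos kg; apply: filterS2 => x + + Dx => /(_ Dx) <- /(_ Dx); rewrite lee_fin.
Qed.

Lemma Rintegral_itv_ge_cst (g : R -> R) (k s t : R) : 0 <= k ->
  mu.-integrable `]s, t]%classic (EFin \o g) ->
  {ae mu, forall x, `]s, t]%classic x -> k <= g x} ->
  k * (t - s) <= \int[mu]_(x in `]s, t]%classic) g x.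
Proof.
move=> k0 ig kg.
have := ae_cst_le_integral (measurable_itv _) ig k0 kg.
rewrite lebesgue_measure_itv /= lte_fin.
have [st|ts] := ltP s t; last first.
  move=> _; rewrite set_itv_ge ?bnd_simp -?leNgt// Rintegral_set0.
  by rewrite mulr_ge0_le0// subr_le0.
by rewrite -EFinD -EFinM -lee_fin /Rintegral fineK//; exact: integrable_fin_num.
Qed.

Lemma W11_integrable_itv (T : R) (u : R -> R) (s t : R) : W11 T u ->
  0 <= s -> t <= T -> mu.-integrable `]s, t]%classic (EFin \o derive1 u).
Proof.
move=> [iu _] s0 tT; apply: integrableS iu => //; first exact: measurable_itv.
by apply: subset_itv; rewrite bnd_simp.
Qed.

Lemma W11_increment (T : R) (u : R -> R) (s t : R) : W11 T u ->
  0 <= s -> s <= t -> t <= T ->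
  u t - u s = \int[mu]_(x in `]s, t]%classic) derive1 u x.
Proof.
move=> [iu Hu] s0 st tT; have t0 := le_trans s0 st.
rewrite (Hu t) ?(Hu s) /Iset/= ?in_itv/= ?s0 ?t0 ?(le_trans st tT)//.
rewrite opprD addrACA subrr add0r.
apply: (@Rintegral_itvB R (derive1 u) (BLeft 0) (BRight t) s) => //.
apply: integrableS iu; [exact: measurable_itv | exact: measurable_itv |].
by apply: subset_itvl; rewrite bnd_simp.
Qed.

Lemma W11_sub_increment_ge (T : R) (u v : R -> R) (s t k : R) :
  W11 T u -> W11 T v -> 0 <= s -> s <= t -> t <= T -> 0 <= k ->
  {ae mu, forall x, `]s, t]%classic x -> k <= derive1 u x - derive1 v x} ->
  k * (t - s) <= (u t - v t) - (u s - v s).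
Proof.
move=> Wu Wv s0 st tT k0 kuv.
have iu := W11_integrable_itv Wu s0 tT; have iv := W11_integrable_itv Wv s0 tT.
have -> : u t - v t - (u s - v s) = (u t - u s) - (v t - v s) by ring.
rewrite (W11_increment Wu) // (W11_increment Wv) // -RintegralB//.
apply: Rintegral_itv_ge_cst => //.
rewrite (_ : EFin \o _ = fun x => (EFin \o derive1 u) x - (EFin \o derive1 v) x)%E.
  exact: integrableB.
by apply/funext => x /=; rewrite EFinB.
Qed.

End Integrals.

Section ContinuousCoefficient.
Variables (R : realType) (T : R) (a : R -> R -> R).
Hypothesis a_cont :
  {within [set tx : R * R | Iset T tx.1], continuous (fun tx => a tx.1 tx.2)}.

Lemma cvg_within_a_graph (u : R -> R) (t0 : R) : Iset T t0 ->
  {within Iset T, continuous u} ->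
  (fun t => a t (u t)) @ within (Iset T) (nbhs t0) --> a t0 (u t0).
Proof.
move=> It0 u_cont Q Q_near.
have IF : within (Iset T) (nbhs t0) (Iset T) by exact: withinT.
have graph_cvg : (fun t => (t, u t)) @ within (Iset T) (nbhs t0) --> (t0, u t0).
  have id_cvg : id @ within (Iset T) (nbhs t0) --> t0 by exact: cvg_within.
  exact: cvg_pair id_cvg ((subspace_continuousP _ _).1 u_cont t0 It0).
have := graph_cvg _ ((subspace_continuousP _ _).1 a_cont (t0, u t0) It0 _ Q_near).
by apply: filterS2 IF => t It /= /(_ It).
Qed.

Lemma quotient_gap_near (u v Au Av : R -> R) (t0 : R) : Iset T t0 ->
  {within Iset T, continuous u} -> {within Iset T, continuous v} ->
  {within Iset T, continuous Au} -> {within Iset T, continuous Av} ->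
  u t0 = v t0 -> 0 < a t0 (u t0) -> Av t0 < Au t0 ->
  exists2 k, 0 < k & \forall t \near within (Iset T) (nbhs t0),
    [/\ a t (u t) != 0, a t (v t) != 0 &
         k <= Au t / a t (u t) - Av t / a t (v t)].
Proof.
move=> It0 u_cont v_cont Au_cont Av_cont uv0 a0 Avu.
have cvgI (w : R -> R) : {within Iset T, continuous w} ->
    w @ within (Iset T) (nbhs t0) --> w t0.
  by move=> w_cont; exact: (subspace_continuousP _ _).1 w_cont t0 It0.
have au := cvg_within_a_graph It0 u_cont.
have av := cvg_within_a_graph It0 v_cont; rewrite -uv0 in av.
set a0' := a t0 (u t0) in a0 au av *.
have qu : (fun t => Au t / a t (u t)) @ within (Iset T) (nbhs t0) --> Au t0 / a0'.
  exact: cvgM (cvgI _ Au_cont) (cvgV (lt0r_neq0 a0) au).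
have qv : (fun t => Av t / a t (v t)) @ within (Iset T) (nbhs t0) --> Av t0 / a0'.
  exact: cvgM (cvgI _ Av_cont) (cvgV (lt0r_neq0 a0) av).
pose k := (Au t0 - Av t0) / a0' / 2.
have k0 : 0 < k by rewrite divr_gt0// divr_gt0// subr_gt0.
have gap0 : Au t0 / a0' - Av t0 / a0' = 2 * k.
  by rewrite /k; field; rewrite lt0r_neq0.
have k2 : 0 < k / 2 by rewrite divr_gt0.
exists k => //; near=> t.
have : `|Au t0 / a0' - Au t / a t (u t)| < k / 2.
  by near: t; exact: cvgr_dist_lt _ _ qu _ k2.
have : `|Av t0 / a0' - Av t / a t (v t)| < k / 2.
  by near: t; exact: cvgr_dist_lt _ _ qv _ k2.
have : `|a0' - a t (u t)| < a0' by near: t; exact: cvgr_dist_lt _ _ au _ a0.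
have : `|a0' - a t (v t)| < a0' by near: t; exact: cvgr_dist_lt _ _ av _ a0.
rewrite !ltr_norml => /andP[? ?] /andP[? ?] /andP[? ?] /andP[? ?].
by split; [rewrite gt_eqF//; lra | rewrite gt_eqF//; lra | lra].
Unshelve. all: by end_near.
Qed.

Lemma calA_gap_increment (u v Au Av : R -> R) (t0 : R) : Iset T t0 ->
  W11 T u -> W11 T v ->
  {within Iset T, continuous u} -> {within Iset T, continuous v} ->
  is_calA T a u Au -> is_calA T a v Av ->
  u t0 = v t0 -> 0 < a t0 (u t0) -> Av t0 < Au t0 ->
  exists2 k, 0 < k & exists2 e, 0 < e & forall s t,
    0 <= s -> s <= t -> t <= T -> t0 - e < s -> t < t0 + e ->
    k * (t - s) <= (u t - v t) - (u s - v s).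
Proof.
move=> It0 Wu Wv u_cont v_cont [Au_cont Au_ae] [Av_cont Av_ae] uv0 a0 Avu.
have [k k0] := quotient_gap_near It0 u_cont v_cont Au_cont Av_cont uv0 a0 Avu.
rewrite near_withinE => /nbhs_ballP[e /= e0 gap].
exists k => //; exists e => // s t s0 st tT t0s tt0.
apply: (W11_sub_increment_ge Wu Wv s0 st tT (ltW k0)).
move: Au_ae Av_ae; rewrite /ae_on; apply: filterS2 => x Au_x Av_x.
rewrite /= in_itv /= => /andP[sx xt].
have Ix : Iset T x by rewrite /Iset /= in_itv /= (le_trans s0 (ltW sx)) (le_trans xt tT).
have x_near : ball t0 e x by rewrite -ball_normE /= ltr_norml; apply/andP; split; lra.
have [aux avx] := gap x x_near Ix.
by rewrite (Au_x Ix) (Av_x Ix) ![a x _ * _]mulrC !mulfK.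
Qed.

Lemma calA_le_left_endpoint (u v Au Av : R -> R) : 0 < T ->
  W11 T u -> W11 T v ->
  {within Iset T, continuous u} -> {within Iset T, continuous v} ->
  (forall t, Iset T t -> u t <= v t) -> u 0 = v 0 -> 0 < a 0 (u 0) ->
  is_calA T a u Au -> is_calA T a v Av -> Au 0 <= Av 0.
Proof.
move=> T0 Wu Wv u_cont v_cont uv uv0 a0 Au_calA Av_calA; rewrite leNgt; apply/negP.
have I0 : Iset T 0 by rewrite /Iset /= in_itv /= lexx ltW.
move=> /(calA_gap_increment I0 Wu Wv u_cont v_cont Au_calA Av_calA uv0 a0).
move=> [k k0 [e e0 incr]].
pose t := Num.min (e / 2) T.
have t0 : 0 < t by rewrite /t lt_min T0 andbT divr_gt0.
have tT : t <= T by rewrite /t ge_min lexx orbT.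
have te : t < 0 + e.
  have : t <= e / 2 by rewrite /t ge_min lexx.
  lra.
have e_lt : 0 - e < 0 by rewrite sub0r oppr_lt0.
have := incr 0 t (lexx 0) (ltW t0) tT e_lt te.
rewrite uv0 subrr subr0 => kt.
have It : Iset T t by rewrite /Iset /= in_itv /= ltW.
have := uv t It; have := mulr_gt0 k0 t0; lra.
Qed.

Lemma calA_ge_right_endpoint (u v Au Av : R -> R) : 0 < T ->
  W11 T u -> W11 T v ->
  {within Iset T, continuous u} -> {within Iset T, continuous v} ->
  (forall t, Iset T t -> u t <= v t) -> u T = v T -> 0 < a T (u T) ->
  is_calA T a u Au -> is_calA T a v Av -> Av T <= Au T.
Proof.
move=> T0 Wu Wv u_cont v_cont uv uvT aT Au_calA Av_calA; rewrite leNgt; apply/negP.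
have IT : Iset T T by rewrite /Iset /= in_itv /= lexx ltW.
rewrite uvT in aT.
move=> /(calA_gap_increment IT Wv Wu v_cont u_cont Av_calA Au_calA (esym uvT) aT).
move=> [k k0 [e e0 incr]].
pose s := Num.max (T - e / 2) 0.
have s0 : 0 <= s by rewrite /s le_max lexx orbT.
have sT : s < T by rewrite /s gt_max T0 andbT; lra.
have es : T - e < s.
  have : T - e / 2 <= s by rewrite /s le_max lexx.
  lra.
have Te : T < T + e by rewrite ltrDl.
have := incr s T s0 (ltW sT) (lexx T) es Te.
rewrite uvT subrr sub0r => ks.
have Is : Iset T s by rewrite /Iset /= in_itv /= s0 ltW.
have Ts : 0 < T - s by rewrite subr_gt0.
have := uv s Is; have := mulr_gt0 k0 Ts; lra.
Qed.
End ContinuousCoefficient.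

Theorem lemma4p3 (R : realType) (T p : R) (Phi : R -> R) (a : R -> R -> R)
  (h : R -> R) (f : R -> R -> R -> R) (alpha beta : R -> R) :
  0 < T -> 1 < p ->
  incr_homeo Phi ->
  {within [set tx : R * R | Iset T tx.1], continuous (fun tx => a tx.1 tx.2)} ->
  {within Iset T, continuous h} ->
  (forall t, Iset T t -> 0 <= h t) ->
  (forall t x, Iset T t -> h t <= a t x) ->
  ae_on T (fun t => 0 < h t) -> Lp T p (fun t => (h t)^-1) ->
  Caratheodory T f ->
  W1p T p alpha -> W1p T p beta ->
  lower_sol T Phi a f alpha -> upper_sol T Phi a f beta ->
  (forall t, Iset T t -> alpha t <= beta t) ->
  (forall x, a 0 x != 0) -> (forall x, a T x != 0) ->
  (alpha 0 = beta 0 ->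
     forall Aa Ab, is_calA T a alpha Aa -> is_calA T a beta Ab -> Aa 0 <= Ab 0) /\
  (alpha T = beta T ->
     forall Aa Ab, is_calA T a alpha Aa -> is_calA T a beta Ab -> Ab T <= Aa T).
Proof.
move=> T0 _ _ a_cont _ h0 ha _ _ _ [Wa _] [Wb _] [ca _] [cb _] ab a0 aT.
have a_gt0 t x : 0 <= t <= T -> a t x != 0 -> 0 < a t x.
  move=> It; rewrite lt_neqAle eq_sym => -> /=.
  by apply: le_trans (h0 t _) (ha t x _); rewrite /Iset /= in_itv.
split=> [ab0 | abT] Aa Ab Aa_calA Ab_calA.
- apply: (calA_le_left_endpoint a_cont T0 Wa Wb ca cb ab ab0 _ Aa_calA Ab_calA).
  by rewrite a_gt0 ?lexx ?ltW.
- apply: (calA_ge_right_endpoint a_cont T0 Wa Wb ca cb ab abT _ Aa_calA Ab_calA).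
  by rewrite a_gt0 ?lexx ?ltW.
Qed.
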